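(* Let $\Omega,\Omega_1$ be prime ideals of $\mathcal S$ with tautological highest weights $\lambda=\lambda_\Omega$ and $\lambda_1=\lambda_{\Omega_1}$. (1) If $\Omega_1=v.\Omega$ with $v\in W^\lambda$, then $B_{\lambda_1}=vB_\lambda$. (2) If in addition $u\in W^{\lambda_1}$, then $uv\in W^\lambda$.
   Context: $F$ is an algebraically closed field of characteristic zero; $\mathfrak g$ is a semisimple Lie algebra over $F$ with Cartan subalgebra $\mathfrak h$, root system $R$, positive system $R^+$, Weyl group $W$, $\rho=\frac12\sum_{\alpha\in R^+}\alpha$, dot action $w.\xi=w(\xi+\rho)-\rho$; $H_\alpha$ is the coroot of $\alpha$. $\mathcal S=S(\mathfrak h)$ is identified with polynomial functions on $\mathfrak h^*$, with $(w.f)(\xi)=f(w^{-1}.\xi)$ and $w.\Omega=\{w.f:f\in\Omega\}$. For a prime $\Omega$, $\mathbb F$ is the fraction field of $\mathcal S/\Omega$ and $\lambda_\Omega$ the $\mathbb F$-linear extension of $\mathfrak h\hookrightarrow\mathcal S\to\mathcal S/\Omega\hookrightarrow\mathbb F$. For $\lambda=\lambda_\Omega$: $R_\lambda=\{\alpha\in R: H_\alpha-n\in\Omega\text{ for some }n\in\mathbb Z\}$, $R^+_\lambda=R^+\cap R_\lambda$, $B_\lambda$ the simple roots of $R_\lambda$ in $R^+_\lambda$, $W^\lambda=\{w\in W:w(B_\lambda)\subseteq R^+\}$. *)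

From mathcomp Require Import all_boot all_algebra.
From mathcomp Require Import mpoly.
Set Implicit Arguments. Unset Strict Implicit. Unset Printing Implicit Defensive.
Import GRing.Theory.
Local Open Scope ring_scope.

(* h^* and h are both modelled as F^r (column vectors) in dual coordinates;
   the pairing xi(H) is [pair xi H]. *)
Definition pair (F : fieldType) (r : nat) (x h : 'cV[F]_r) : F :=
  \sum_(i < r) x i 0 * h i 0.

Definition refl (F : fieldType) (r : nat) (a ca : 'cV[F]_r) : 'M[F]_r :=
  1%:M - a *m ca^T.

(* Root system of a semisimple Lie algebra: a reduced crystallographic root
   system R in h^* = F^r spanning h^*, with coroot map cor : alpha |-> H_alpha. *)
Definition root_system (F : fieldType) (r : nat) (R : seq 'cV[F]_r)
    (cor : 'cV[F]_r -> 'cV[F]_r) : Prop :=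
  [/\ uniq R /\ 0 \notin R,
      (forall a, a \in R -> pair a (cor a) = 2%:R),
      (forall a b, a \in R -> b \in R -> refl a (cor a) *m b \in R),
      (forall a b, a \in R -> b \in R -> exists n : int, pair b (cor a) = n%:~R) /\
      (forall a (c : F), a \in R -> c *: a \in R -> c = 1 \/ c = -1)
    & (forall x : 'cV[F]_r, exists c : 'cV[F]_r -> F, x = \sum_(a <- R) c a *: a)].

Definition positive_system (F : fieldType) (r : nat) (R P : seq 'cV[F]_r) : Prop :=
  uniq P /\
  exists D : seq 'cV[F]_r,
    [/\ uniq D, {subset D <= R},
        (forall c : 'cV[F]_r -> F, \sum_(d <- D) c d *: d = 0 ->
            forall d, d \in D -> c d = 0),
        (forall a, a \in R -> exists k : 'cV[F]_r -> nat,
            a = \sum_(d <- D) (k d)%:R *: d \/ a = - \sum_(d <- D) (k d)%:R *: d)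
      & (forall a, a \in P <-> (a \in R /\ exists k : 'cV[F]_r -> nat,
            a = \sum_(d <- D) (k d)%:R *: d))].

Definition in_W (F : fieldType) (r : nat) (R : seq 'cV[F]_r)
    (cor : 'cV[F]_r -> 'cV[F]_r) (w : 'M[F]_r) : Prop :=
  exists s : seq 'cV[F]_r, {subset s <= R} /\
    w = foldr (fun a m => refl a (cor a) *m m) 1%:M s.

Definition rho (F : fieldType) (r : nat) (P : seq 'cV[F]_r) : 'cV[F]_r :=
  (2%:R)^-1 *: \sum_(a <- P) a.

Definition dot (F : fieldType) (r : nat) (P : seq 'cV[F]_r) (w : 'M[F]_r)
    (xi : 'cV[F]_r) : 'cV[F]_r :=
  w *m (xi + rho P) - rho P.

(* S = S(h) = polynomial functions on h^*; H in h as a linear polynomial *)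
Definition hpoly (F : fieldType) (r : nat) (h : 'cV[F]_r) : {mpoly F[r]} :=
  \sum_(i < r) h i 0 *: 'X_i.

(* (w.f)(xi) = f(w^{-1}.xi) *)
Definition dotp (F : fieldType) (r : nat) (P : seq 'cV[F]_r) (w : 'M[F]_r)
    (f : {mpoly F[r]}) : {mpoly F[r]} :=
  let wi := invmx w in
  let rh := rho P in
  comp_mpoly [tuple (\sum_(j < r) wi i j *: ('X_j + (rh j 0)%:MP)) - (rh i 0)%:MP
             | i < r] f.

Definition dot_set (F : fieldType) (r : nat) (P : seq 'cV[F]_r) (w : 'M[F]_r)
    (Om : {mpoly F[r]} -> Prop) : {mpoly F[r]} -> Prop :=
  fun g => exists f, Om f /\ g = dotp P w f.

Definition prime_ideal (T : comNzRingType) (I : T -> Prop) : Prop :=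
  [/\ I 0, (forall a b, I a -> I b -> I (a + b)),
      (forall a b, I b -> I (a * b)), ~ I 1
    & (forall a b, I (a * b) -> I a \/ I b)].

Definition Rlam (F : fieldType) (r : nat) (R : seq 'cV[F]_r)
    (cor : 'cV[F]_r -> 'cV[F]_r) (Om : {mpoly F[r]} -> Prop) (a : 'cV[F]_r) : Prop :=
  a \in R /\ exists n : int, Om (hpoly (cor a) - n%:~R).

Definition Rlam_pos (F : fieldType) (r : nat) (R P : seq 'cV[F]_r)
    (cor : 'cV[F]_r -> 'cV[F]_r) (Om : {mpoly F[r]} -> Prop) (a : 'cV[F]_r) : Prop :=
  Rlam R cor Om a /\ a \in P.

(* B_lambda: simple roots of R_lambda w.r.t. R_lambda^+ (indecomposable
   elements of R_lambda^+) *)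
Definition Blam (F : fieldType) (r : nat) (R P : seq 'cV[F]_r)
    (cor : 'cV[F]_r -> 'cV[F]_r) (Om : {mpoly F[r]} -> Prop) (a : 'cV[F]_r) : Prop :=
  Rlam_pos R P cor Om a /\
  ~ (exists b c, Rlam_pos R P cor Om b /\ Rlam_pos R P cor Om c /\ a = b + c).

Definition Wlam (F : fieldType) (r : nat) (R P : seq 'cV[F]_r)
    (cor : 'cV[F]_r -> 'cV[F]_r) (Om : {mpoly F[r]} -> Prop) (w : 'M[F]_r) : Prop :=
  in_W R cor w /\ (forall a, Blam R P cor Om a -> w *m a \in P).

(* The coroot map intertwines the Weyl group, H_(w a) = (w^-1)^T H_a, and
   w.rho - rho lies in the root lattice, so the dot action of w sends the
   polynomial H_a - n to H_(w a) - n' with n' an integer.  Hence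
   R_lambda1 = v R_lambda.  Every element of R_lambda^+ is a sum of elements
   of B_lambda, which v sends into R^+; so v maps R_lambda^+ into R^+, and
   since R_lambda is the disjoint union of R_lambda^+ and -R_lambda^+, onto
   R_lambda1^+.  A bijection of positive systems preserves indecomposables,
   which gives (1), and (2) follows as u v B_lambda = u B_lambda1. *)

From HB Require Import structures.
From mathcomp Require Import all_boot all_algebra.
From mathcomp Require Import mpoly.
From mathcomp Require Import ring zify.
From Stdlib Require Import Classical.
Set Implicit Arguments. Unset Strict Implicit. Unset Printing Implicit Defensive.
Import GRing.Theory.
Local Open Scope ring_scope.

Lemma pchar0_natr_inj (F : fieldType) : [pchar F] =i pred0 ->
  injective (fun n : nat => n%:R : F).
Proof.
move=> /pcharf0P F0 n m e.
wlog le_mn : n m e / (m <= n)%N.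
  by move=> W; case: (leqP m n) => [/W->//|/ltnW/W->].
have /eqP : (n - m)%:R = 0 :> F by rewrite natrB // e subrr.
by rewrite F0 subn_eq0 => le_nm; apply/eqP; rewrite eqn_leq le_nm.
Qed.

Section Pairing.
Variables (F : fieldType) (r : nat).
Local Notation V := 'cV[F]_r.

Lemma pairE (x h : V) : pair x h = (x^T *m h) 0 0.
Proof. by rewrite /pair !mxE; apply: eq_bigr => i _; rewrite mxE. Qed.

Lemma pairC (x h : V) : pair x h = pair h x.
Proof. by rewrite /pair; apply: eq_bigr => i _; rewrite mulrC. Qed.

Lemma pair_mulmx (M : 'M[F]_r) (x h : V) : pair (M *m x) h = pair x (M^T *m h).
Proof. by rewrite !pairE trmx_mul mulmxA. Qed.

Lemma pairDl (x y h : V) : pair (x + y) h = pair x h + pair y h.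
Proof. by rewrite !pairE linearD /= mulmxDl mxE. Qed.

Lemma pairZl (k : F) (x h : V) : pair (k *: x) h = k * pair x h.
Proof. by rewrite !pairE linearZ /= -scalemxAl mxE. Qed.

Lemma pairNl (x h : V) : pair (- x) h = - pair x h.
Proof. by rewrite -scaleN1r pairZl mulN1r. Qed.

Lemma pairBl (x y h : V) : pair (x - y) h = pair x h - pair y h.
Proof. by rewrite pairDl pairNl. Qed.

Lemma pairBr (x h h' : V) : pair x (h - h') = pair x h - pair x h'.
Proof. by rewrite pairC pairBl !(pairC x). Qed.

Lemma pair0l (h : V) : pair 0 h = 0.
Proof. by rewrite -(scale0r 0) pairZl mul0r. Qed.

Lemma pair_suml I (s : seq I) (f : I -> V) h :
  pair (\sum_(i <- s) f i) h = \sum_(i <- s) pair (f i) h.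
Proof.
elim: s => [|a s IH]; first by rewrite !big_nil pair0l.
by rewrite !big_cons pairDl IH.
Qed.

Lemma pair_delta i (h : V) : pair (delta_mx i 0) h = h i 0.
Proof. by rewrite pairE trmx_delta -rowE mxE. Qed.

Lemma reflE (a c x : V) : refl a c *m x = x - pair x c *: a.
Proof.
rewrite /refl mulmxBl mul1mx -mulmxA [c^T *m x]mx11_scalar mul_mx_scalar.
by rewrite -pairE pairC.
Qed.

End Pairing.

Section DotAction.
Variables (F : fieldType) (r : nat).
Local Notation V := 'cV[F]_r.
Local Notation MP := {mpoly F[r]}.

Fact hpoly_is_linear : linear (@hpoly F r).
Proof.
move=> k x y; rewrite /hpoly scaler_sumr -big_split; apply: eq_bigr => i _.
by rewrite !mxE scalerDl scalerA.
Qed.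

HB.instance Definition _ :=
  GRing.isLinear.Build F V MP _ (@hpoly F r) hpoly_is_linear.

Lemma hpoly_delta i : hpoly (delta_mx i 0 : V) = 'X_i.
Proof.
rewrite /hpoly (bigD1 i) //= big1 ?addr0; first by rewrite mxE !eqxx scale1r.
by move=> j /negPf ji; rewrite mxE ji scale0r.
Qed.

Lemma mpolyC_int (n : int) : (n%:~R : MP) = (n%:~R : F)%:MP.
Proof. by rewrite rmorph_int. Qed.

Lemma mpolyCZ (c d : F) : c *: (d%:MP : MP) = (c * d)%:MP.
Proof. by rewrite -mul_mpolyC -mpolyCM. Qed.

(* comp_mpoly (affine_subst M c) f is the polynomial xi |-> f (M xi + c). *)
Definition affine_subst (M : 'M[F]_r) (c : V) : r.-tuple MP :=
  [tuple hpoly (M^T *m delta_mx i 0) + (c i 0)%:MP | i < r].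

Lemma comp_hpoly M c (h : V) :
  comp_mpoly (affine_subst M c) (hpoly h) = hpoly (M^T *m h) + (pair c h)%:MP.
Proof.
rewrite {1}/hpoly raddf_sum /=.
under eq_bigr => i _.
  rewrite comp_mpolyZ comp_mpolyXU -tnth_nth tnth_mktuple scalerDr.
  rewrite mpolyCZ mulrC -linearZ /= scalemxAr.
over.
rewrite big_split /= -raddf_sum -mulmx_sumr -raddf_sum /=.
congr (hpoly (_ *m _) + _).
by rewrite [RHS]matrix_sum_delta; apply: eq_bigr => i _; rewrite big_ord1.
Qed.

Lemma comp_mpoly_comp (t1 t2 : r.-tuple MP) (p : MP) :
  comp_mpoly t1 (comp_mpoly t2 p) =
  comp_mpoly [tuple comp_mpoly t1 (tnth t2 i) | i < r] p.
Proof.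
rewrite (comp_mpolyEX p t2) [RHS]comp_mpolyEX raddf_sum /=.
apply: eq_bigr => m _; rewrite comp_mpolyZ !comp_mpolyX rmorph_prod.
by congr (_ *: _); apply: eq_bigr => i _; rewrite rmorphXn tnth_mktuple.
Qed.

Variable (P : seq V).

Lemma dotpE w f :
  dotp P w f = comp_mpoly (affine_subst (invmx w) (invmx w *m rho P - rho P)) f.
Proof.
rewrite /dotp; congr comp_mpoly; apply: eq_from_tnth => i; rewrite !tnth_mktuple.
rewrite -colE; set wi := invmx w.
rewrite [X in _ = X + _](_ : _ = \sum_(j < r) wi i j *: 'X_j); last first.
  by rewrite /hpoly; apply: eq_bigr => j _; rewrite !mxE.
under eq_bigr do rewrite scalerDr mpolyCZ.
by rewrite big_split /= -addrA !mxE -raddf_sum mpolyCB.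
Qed.

Lemma dotp_hpoly w (h : V) k :
  dotp P w (hpoly h + k%:MP) =
  hpoly ((invmx w)^T *m h) + (pair (invmx w *m rho P - rho P) h + k)%:MP.
Proof. by rewrite dotpE raddfD /= comp_hpoly comp_mpolyC mpolyCD addrA. Qed.

Lemma dotpK w f : w \in unitmx -> dotp P (invmx w) (dotp P w f) = f.
Proof.
move=> wu; rewrite !dotpE comp_mpoly_comp invmxK.
rewrite -[RHS](comp_mpoly_id f); congr comp_mpoly; apply: eq_from_tnth => i.
rewrite !tnth_mktuple raddfD /= comp_hpoly comp_mpolyC mulmxA -trmx_mul.
rewrite mulVmx // trmx1 mul1mx hpoly_delta -addrA -mpolyCD.
rewrite pairC pair_mulmx trmxK pair_delta mulmxBr mulmxA mulVmx // mul1mx.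
by rewrite !mxE addrA subrK subrr mpolyC0 addr0.
Qed.

Lemma dotp_inj w : w \in unitmx -> injective (dotp P w).
Proof. by move=> wu f g e; rewrite -(dotpK f wu) e dotpK. Qed.

End DotAction.

Section RootSystem.
Variables (F : fieldType) (F0 : [pchar F] =i pred0) (r : nat).
Local Notation V := 'cV[F]_r.
Variables (R : seq V) (cor : V -> V) (hR : root_system R cor).

Local Notation s_ a := (refl a (cor a)).

Lemma pair_root_coroot a : a \in R -> pair a (cor a) = 2%:R.
Proof. by case: hR => _ H _ _ _; apply: H. Qed.

Lemma refl_root a b : a \in R -> b \in R -> s_ a *m b \in R.
Proof. by case: hR => _ _ H _ _; apply: H. Qed.

Lemma root_neq0 : 0 \notin R.
Proof. by case: hR => [[_ H]] _ _ _ _. Qed.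

Lemma pair_root_coroot_int a b : a \in R -> b \in R ->
  exists n : int, pair b (cor a) = n%:~R.
Proof. by case: hR => _ _ _ [H _] _; apply: H. Qed.

Lemma roots_span (x : V) : exists c : V -> F, x = \sum_(a <- R) c a *: a.
Proof. by case: hR => _ _ _ _ H; apply: H. Qed.

Lemma refl_sqr a : a \in R -> s_ a *m s_ a = 1%:M.
Proof.
move=> aR; rewrite /refl mulmxBl mul1mx mulmxBr mulmx1 -mulmxA (mulmxA (cor a)^T).
rewrite [(cor a)^T *m a]mx11_scalar -pairE pairC pair_root_coroot //.
rewrite mul_scalar_mx -scalemxAr scaler_nat; set X := a *m _.
have -> : X - X *+ 2 = - X by rewrite mulr2n opprD addrA subrr add0r.
by rewrite opprK subrK.
Qed.

Lemma rootN a : a \in R -> - a \in R.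
Proof.
move=> aR; have := refl_root aR aR; rewrite reflE pair_root_coroot //.
by rewrite scaler_nat mulr2n opprD addrA subrr add0r.
Qed.

Lemma orthogonal_roots_eq0 (h : V) : (forall b, b \in R -> pair b h = 0) -> h = 0.
Proof.
move=> H; apply/matrixP => i j; rewrite ord1 [RHS]mxE -pair_delta.
have [c ->] := roots_span (delta_mx i 0).
by rewrite pair_suml big1_seq // => b /andP[_ bR]; rewrite pairZl H // mulr0.
Qed.

(* If refl a c also preserves R, then s_ a * refl a c is the transvection
   b |-> b + <b, c - cor a> a.  Its iterates stay in the finite set R and, in
   characteristic 0, are pairwise distinct unless <b, c - cor a> = 0. *)
Lemma coroot_uniq a c : a \in R -> pair a c = 2%:R ->
  (forall b, b \in R -> refl a c *m b \in R) -> c = cor a.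
Proof.
move=> aR pac Rc; set phi := c - cor a.
have pa : pair a phi = 0 by rewrite pairBr pac pair_root_coroot // subrr.
pose u (x : V) : V := s_ a *m (refl a c *m x).
have uE x : u x = x + pair x phi *: a.
  rewrite /u !reflE pairBl pairZl pair_root_coroot // pairBr.
  by apply/matrixP => i j; rewrite !mxE; ring.
have iter_uR b n : b \in R -> iter n u b \in R.
  by move=> bR; elim: n => [|n IH] //=; rewrite /u refl_root // Rc.
have iter_uE b n : iter n u b = b + (n%:R * pair b phi) *: a.
  elim: n => [|n IH] /=; first by rewrite mul0r scale0r addr0.
  rewrite uE IH pairDl pairZl pa mulr0 addr0.
  by apply/matrixP => i j; rewrite !mxE -natr1; ring.
have a0 : a != 0 by apply: contraNneq root_neq0 => <-.
apply/eqP; rewrite -subr_eq0; apply/eqP/orthogonal_roots_eq0 => b bR.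
apply/eqP/negPn/negP => pb0.
pose orb := [seq iter n u b | n <- iota 0 (size R).+1].
have orb_uniq : uniq orb.
  rewrite map_inj_uniq ?iota_uniq // => n m; rewrite !iter_uE => /addrI/eqP.
  rewrite -subr_eq0 -scalerBl scaler_eq0 (negPf a0) orbF subr_eq0.
  by move=> /eqP/(mulIf pb0)/(pchar0_natr_inj F0).
suff : ((size R).+1 <= size R)%N by rewrite ltnn.
have := uniq_leq_size orb_uniq; rewrite size_map size_iota; apply.
by move=> x /mapP[n _ ->]; apply: iter_uR.
Qed.

Definition weyl_word (s : seq V) : 'M[F]_r := foldr (fun a m => s_ a *m m) 1%:M s.

Lemma weyl_word_cat s t : weyl_word (s ++ t) = weyl_word s *m weyl_word t.
Proof. by elim: s => [|a s IH] /=; rewrite ?mul1mx // IH mulmxA. Qed.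

Lemma weyl_word_rev s : {subset s <= R} -> weyl_word (rev s) *m weyl_word s = 1%:M.
Proof.
elim: s => [|a s IH] sR /=; first by rewrite mulmx1.
have aR : a \in R by apply: sR; rewrite inE eqxx.
rewrite rev_cons -cats1 weyl_word_cat /= mulmx1 mulmxA -(mulmxA (weyl_word _)).
by rewrite refl_sqr // mulmx1 IH // => x xs; apply: sR; rewrite inE xs orbT.
Qed.

Lemma in_W_refl a : a \in R -> in_W R cor (s_ a).
Proof. by move=> aR; exists [:: a]; rewrite /= mulmx1; split=> // x /[!inE]/eqP->. Qed.

Lemma in_W_mul w w' : in_W R cor w -> in_W R cor w' -> in_W R cor (w *m w').
Proof.
move=> [s [sR ->]] [t [tR ->]]; exists (s ++ t); split.
  by move=> x; rewrite mem_cat => /orP[/sR|/tR].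
by rewrite -!/(weyl_word _) weyl_word_cat.
Qed.

Lemma in_W_root w b : in_W R cor w -> b \in R -> w *m b \in R.
Proof.
move=> [s [sR ->]] bR; elim: s sR => [|a s IH] sR /=; first by rewrite mul1mx.
rewrite -mulmxA refl_root //; first by apply: sR; rewrite inE eqxx.
by apply: IH => x xs; apply: sR; rewrite inE xs orbT.
Qed.

Lemma in_W_unit w : in_W R cor w -> w \in unitmx.
Proof.
move=> [s [sR ->]]; have e := weyl_word_rev sR.
by apply: (intro_unitmx (conj e (mulmx1C e))).
Qed.

Lemma in_W_inv w : in_W R cor w -> in_W R cor (invmx w).
Proof.
move=> wW; have wu := in_W_unit wW; case: wW => [s [sR ew]].
rewrite -/(weyl_word s) in ew; exists (rev s); split.
  by move=> x; rewrite mem_rev; exact: sR.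
rewrite -/(weyl_word (rev s)) -[invmx w]mul1mx -(weyl_word_rev sR) -mulmxA.
by rewrite -ew mulmxV // mulmx1.
Qed.

Lemma in_W_mulmx_inj w : in_W R cor w -> injective (mulmx w : V -> V).
Proof.
move=> /in_W_unit wu x y e.
by rewrite -[x]mul1mx -[y]mul1mx -(mulVmx wu) -!mulmxA e.
Qed.

Lemma coroot_W w a : in_W R cor w -> a \in R -> cor (w *m a) = (invmx w)^T *m cor a.
Proof.
move=> wW aR; have wu := in_W_unit wW.
symmetry; apply: coroot_uniq; first exact: in_W_root.
  by rewrite pairC pair_mulmx trmxK mulmxA mulVmx // mul1mx pairC pair_root_coroot.
move=> b bR; have -> : refl (w *m a) ((invmx w)^T *m cor a) *m b =
                       w *m (s_ a *m (invmx w *m b)).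
  by rewrite !reflE mulmxBr mulmxA mulmxV // mul1mx -scalemxAr pair_mulmx.
by apply/in_W_root/refl_root/in_W_root/bR/in_W_inv.
Qed.

Lemma corootN a : a \in R -> cor (- a) = - cor a.
Proof.
move=> aR; symmetry; apply: coroot_uniq; first exact: rootN.
  by rewrite pairNl pairC pairNl opprK pairC pair_root_coroot.
have -> : refl (- a) (- cor a) = s_ a by rewrite /refl linearN /= mulmxN mulNmx opprK.
by move=> b; apply: refl_root.
Qed.

Inductive root_lattice : V -> Prop :=
| root_lattice0 : root_lattice 0
| root_latticeD x y : root_lattice x -> root_lattice y -> root_lattice (x + y)
| root_latticeN x : root_lattice x -> root_lattice (- x)
| root_lattice_root a : a \in R -> root_lattice a.

Lemma root_lattice_pair_int x b : root_lattice x -> b \in R ->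
  exists n : int, pair x (cor b) = n%:~R.
Proof.
move=> Lx bR; elim: x / Lx => [|x y _ [m em] _ [n en]|x _ [n en]|a aR].
- by exists 0; rewrite pair0l.
- by exists (m + n); rewrite pairDl em en intrD.
- by exists (- n); rewrite pairNl en mulrNz.
- exact: pair_root_coroot_int.
Qed.

Lemma root_lattice_W w x : in_W R cor w -> root_lattice x -> root_lattice (w *m x).
Proof.
move=> wW; elim: x / => [|x y _ Lx _ Ly|x _ Lx|a aR].
- by rewrite mulmx0; constructor.
- by rewrite mulmxDr; constructor.
- by rewrite mulmxN; constructor.
- by constructor; apply: in_W_root.
Qed.

Lemma root_lattice_sum (s : seq V) : {subset s <= R} ->
  root_lattice (\sum_(a <- s) a).
Proof.
elim: s => [|a s IH] sR; first by rewrite big_nil; constructor.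
rewrite big_cons; constructor; first by constructor; apply: sR; rewrite inE eqxx.
by apply: IH => x xs; apply: sR; rewrite inE xs orbT.
Qed.

Section PositiveSystem.
Variables (P D : seq V).
Hypotheses (P_uniq : uniq P)
  (D_free : forall c : V -> F,
     \sum_(d <- D) c d *: d = 0 -> forall d, d \in D -> c d = 0)
  (root_nat_span : forall a, a \in R -> exists k : V -> nat,
     a = \sum_(d <- D) (k d)%:R *: d \/ a = - \sum_(d <- D) (k d)%:R *: d)
  (posE : forall a, a \in P <-> (a \in R /\ exists k : V -> nat,
     a = \sum_(d <- D) (k d)%:R *: d)).

Definition nat_span (x : V) := exists k : V -> nat, x = \sum_(d <- D) (k d)%:R *: d.

Lemma nat_spanD x y : nat_span x -> nat_span y -> nat_span (x + y).
Proof.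
move=> [k ->] [k' ->]; exists (fun d => (k d + k' d)%N).
by rewrite -big_split /=; apply: eq_bigr => d _; rewrite natrD scalerDl.
Qed.

Lemma nat_coef_uniq (k k' : V -> nat) :
  \sum_(d <- D) (k d)%:R *: d = \sum_(d <- D) (k' d)%:R *: d ->
  forall d, d \in D -> k d = k' d.
Proof.
move=> e d dD; apply: (pchar0_natr_inj F0); apply/eqP; rewrite -subr_eq0; apply/eqP.
apply: (D_free (c := fun d => (k d)%:R - (k' d)%:R)) => //.
under eq_bigr do rewrite scalerBl.
by rewrite sumrB e subrr.
Qed.

Lemma nat_span_root_height_gt0 (k : V -> nat) :
  \sum_(d <- D) (k d)%:R *: d \in R -> (0 < \sum_(d <- D) k d)%N.
Proof.
rewrite lt0n; apply: contraTN; rewrite sum_nat_seq_eq0 => /allP k0.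
rewrite big1_seq ?(negPf root_neq0) // => d /andP[_ dD].
by have /eqP -> := k0 d dD; rewrite scale0r.
Qed.

Lemma nat_span_oppr_eq0 x : nat_span x -> nat_span (- x) -> x = 0.
Proof.
move=> [k ek] [k' ek'].
have /nat_coef_uniq k0 : \sum_(d <- D) (k d + k' d)%:R *: d =
                         \sum_(d <- D) (0%N)%:R *: d.
  under eq_bigr do rewrite natrD scalerDl.
  by rewrite big_split /= -ek -ek' subrr big1 // => d _; rewrite scale0r.
rewrite ek big1_seq // => d /andP[_ /k0/eqP]; rewrite addn_eq0 => /andP[/eqP-> _].
by rewrite scale0r.
Qed.

Lemma pos_root a : a \in P -> a \in R.
Proof. by case/posE. Qed.

Lemma pos_or_oppr_pos a : a \in R -> a \in P \/ - a \in P.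
Proof.
move=> aR; have [k [e|e]] := root_nat_span aR; [left | right]; apply/posE.
  by split=> //; exists k.
by split; [exact: rootN | exists k; rewrite e opprK].
Qed.

Lemma pos_oppr_notin a : a \in P -> - a \notin P.
Proof.
move=> /posE[aR na]; apply/negP => /posE[_ nna].
by move: root_neq0; rewrite -(nat_span_oppr_eq0 na nna) aR.
Qed.

Definition pos_rep (x : V) := if x \in P then x else - x.

Lemma pos_rep_refl_perm a : a \in R -> perm_eq [seq pos_rep (s_ a *m p) | p <- P] P.
Proof.
move=> aR; set sg := fun p => pos_rep (s_ a *m p).
have sgP p : p \in P -> sg p \in P.
  move=> pP; rewrite /sg /pos_rep; case: ifP => // spN.
  by case: (pos_or_oppr_pos (refl_root aR (pos_root pP))); rewrite ?spN.
have s_inj : injective (mulmx (s_ a) : V -> V) := in_W_mulmx_inj (in_W_refl aR).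
have sg_inj : {in P &, injective sg}.
  move=> p q pP qP; rewrite /sg /pos_rep.
  case: ifP => _; case: ifP => _.
  - exact: s_inj.
  - move=> e; have e' : p = - q by apply: s_inj; rewrite mulmxN.
    by move: (pos_oppr_notin qP); rewrite -e' pP.
  - move=> e; have e' : p = - q by apply: s_inj; rewrite mulmxN -e opprK.
    by move: (pos_oppr_notin qP); rewrite -e' pP.
  - by move/oppr_inj; exact: s_inj.
have sg_uniq : uniq [seq sg p | p <- P] by rewrite map_inj_in_uniq.
apply: uniq_perm => //; apply: (uniq_min_size sg_uniq _ _).2 => [x|].
  by move=> /mapP[p pP ->]; apply: sgP.
by rewrite size_map.
Qed.

(* As pos_rep \o s_a permutes P, s_a rho - rho is minus the sum of the
   positive roots that s_a makes negative. *)
Lemma refl_rho_sub_rho a : a \in R -> root_lattice (s_ a *m rho P - rho P).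
Proof.
move=> aR; set s := s_ a; set sg := fun p => pos_rep (s *m p).
set N := \sum_(p <- P | s *m p \notin P) sg p.
have sum_sE : s *m \sum_(p <- P) p = \sum_(p <- P) p - N *+ 2.
  have sum_sg : \sum_(p <- P) sg p = \sum_(p <- P) p.
    by rewrite -[RHS](perm_big P (pos_rep_refl_perm aR)) big_map.
  rewrite mulmx_sumr -sum_sg.
  rewrite [LHS](bigID (fun p => s *m p \in P)) /=.
  rewrite [X in _ = X - _](bigID (fun p => s *m p \in P)) /=.
  rewrite [X in _ + X](eq_bigr (fun p => - sg p)) => [|p /negPf spN]; last first.
    by rewrite /sg /pos_rep spN opprK.
  rewrite [X in X + _ = _](eq_bigr sg) => [|p spP]; last by rewrite /sg /pos_rep spP.
  by rewrite sumrN -/N mulr2n opprD addrA addrK.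
have -> : s *m rho P - rho P = - N.
  rewrite /rho -scalemxAr sum_sE scalerBr addrAC subrr add0r -scaler_nat scalerA.
  by rewrite mulVf ?scale1r // (pcharf0P F).1.
apply/root_latticeN; rewrite /N -big_filter -(big_map sg predT id).
apply: root_lattice_sum => x /mapP[p]; rewrite mem_filter => /andP[_ pP ->].
by apply: pos_root; rewrite -(perm_mem (pos_rep_refl_perm aR)); apply: map_f.
Qed.

Lemma W_rho_sub_rho w : in_W R cor w -> root_lattice (w *m rho P - rho P).
Proof.
move=> [s [sR ->]]; elim: s sR => [|a s IH] sR /=.
  by rewrite mul1mx subrr; constructor.
have aR : a \in R by apply: sR; rewrite inE eqxx.
set w_s := weyl_word s; rewrite -mulmxA.
have -> : s_ a *m (w_s *m rho P) - rho P =
          s_ a *m (w_s *m rho P - rho P) + (s_ a *m rho P - rho P).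
  by rewrite mulmxBr addrA subrK.
constructor; last exact: refl_rho_sub_rho.
apply/root_lattice_W/IH; first exact: in_W_refl.
by move=> x xs; apply: sR; rewrite inE xs orbT.
Qed.

Section Transport.
Variables (Om Om1 : {mpoly F[r]} -> Prop) (w : 'M[F]_r).
Hypotheses (wW : in_W R cor w) (Om1E : forall f, Om1 f <-> dot_set P w Om f).

Lemma dotp_hpoly_coroot a : a \in R -> exists m : int, forall k,
  dotp P w (hpoly (cor a) + k%:MP) = hpoly (cor (w *m a)) + (m%:~R + k)%:MP.
Proof.
move=> aR; have [m em] := root_lattice_pair_int (W_rho_sub_rho (in_W_inv wW)) aR.
by exists m => k; rewrite dotp_hpoly (coroot_W wW aR) em.
Qed.

Lemma Rlam_dot b : Rlam R cor Om1 b <-> exists a, Rlam R cor Om a /\ b = w *m a.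
Proof.
have wu := in_W_unit wW.
split=> [[bR [n /Om1E [g [Og eg]]]] | [a [[aR [n Oa]] ->]]].
- set a := invmx w *m b.
  have aR : a \in R by exact: in_W_root (in_W_inv wW) bR.
  have wa : w *m a = b by rewrite /a mulmxA mulmxV // mul1mx.
  have [m em] := dotp_hpoly_coroot aR.
  have g_coroot : g = hpoly (cor a) + (- (m%:~R + n%:~R))%:MP.
    apply: (dotp_inj (P := P) wu); rewrite em -eg wa.
    by rewrite opprD addrA subrr add0r mpolyCN mpolyC_int.
  exists a; split => //; split => //; exists (m + n).
  by rewrite mpolyC_int intrD -mpolyCN -g_coroot.
- split; first exact: in_W_root.
  have [m em] := dotp_hpoly_coroot aR.
  exists (n - m); apply/Om1E; exists (hpoly (cor a) - n%:~R); split => //.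
  rewrite [in dotp _ _ _]mpolyC_int -mpolyCN em.
  by rewrite mpolyC_int intrB -mpolyCN opprB addrC.
Qed.

Hypothesis (OmN : forall f, Om f -> Om (- f)).

Lemma RlamN a : Rlam R cor Om a -> Rlam R cor Om (- a).
Proof.
move=> [aR [n Oa]]; split; first exact: rootN.
exists (- n); rewrite (corootN aR) raddfN /= mpolyC_int mulrNz mpolyCN -opprD.
by rewrite -mpolyC_int; apply: OmN.
Qed.

Hypothesis (wB : forall a, Blam R P cor Om a -> w *m a \in P).

(* An element of R_lambda^+ outside B_lambda is a sum of two elements of
   R_lambda^+ of smaller height (with respect to D), so induction on the height
   reduces to B_lambda, which w sends into R^+. *)
Lemma Rlam_pos_nat_span a : Rlam_pos R P cor Om a -> nat_span (w *m a).
Proof.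
move=> Ha; have [_ [k ek]] := (posE a).1 Ha.2.
move: {2}(\sum_(d <- D) k d) (leqnn (\sum_(d <- D) k d)) => n.
elim: n a k Ha ek => [|n IH] a k Ha ek hn.
  have aR : a \in R by case: Ha => [[]].
  by move: hn (@nat_span_root_height_gt0 k); rewrite -ek leqn0 => /eqP-> /(_ aR).
case: (classic (Blam R P cor Om a)) => [/wB/posE[_ //] | notB].
have [b [c [Hb [Hc eabc]]]] : exists b c, Rlam_pos R P cor Om b /\
    Rlam_pos R P cor Om c /\ a = b + c by apply: NNPP => H; apply: notB.
have [bR [kb ekb]] := (posE b).1 Hb.2.
have [cR [kc ekc]] := (posE c).1 Hc.2.
have hk : \sum_(d <- D) k d = (\sum_(d <- D) kb d + \sum_(d <- D) kc d)%N.
  rewrite -big_split /=; apply: eq_big_seq => d.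
  apply: (nat_coef_uniq (k' := fun d => (kb d + kc d)%N)); rewrite -ek eabc ekb ekc.
  by rewrite -big_split /=; apply: eq_bigr => d' _; rewrite natrD scalerDl.
have := @nat_span_root_height_gt0 kb; rewrite -ekb => /(_ bR) hb.
have := @nat_span_root_height_gt0 kc; rewrite -ekc => /(_ cR) hc.
rewrite eabc mulmxDr; apply: nat_spanD.
  by apply: (IH b kb) => //; rewrite hk in hn; lia.
by apply: (IH c kc) => //; rewrite hk in hn; lia.
Qed.

Lemma Rlam_pos_W a : Rlam_pos R P cor Om a -> w *m a \in P.
Proof.
move=> Ha; apply/posE; split; last exact: Rlam_pos_nat_span.
by apply: in_W_root => //; case: Ha => [[]].
Qed.

Lemma Rlam_pos_dot b :
  Rlam_pos R P cor Om1 b <-> exists a, Rlam_pos R P cor Om a /\ b = w *m a.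
Proof.
split=> [[/Rlam_dot [a [Ha ->]] waP] | [a [Ha ->]]].
  exists a; split => //; split => //.
  have [//|naP] := pos_or_oppr_pos (proj1 Ha).
  have := Rlam_pos_W (conj (RlamN Ha) naP).
  by rewrite mulmxN (negPf (pos_oppr_notin waP)).
split; last exact: Rlam_pos_W.
by apply/Rlam_dot; exists a; case: Ha.
Qed.

Lemma Blam_dot b : Blam R P cor Om1 b <-> exists a, Blam R P cor Om a /\ b = w *m a.
Proof.
split=> [[/Rlam_pos_dot [a [Ha ->]] notsum] | [a [[Ha notsum] ->]]].
  exists a; split => //; split => // [[a1 [a2 [H1 [H2 e]]]]].
  apply: notsum; exists (w *m a1), (w *m a2).
  split; first by apply/Rlam_pos_dot; exists a1.
  split; first by apply/Rlam_pos_dot; exists a2.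
  by rewrite e mulmxDr.
split; first by apply/Rlam_pos_dot; exists a.
move=> [_ [_ [/Rlam_pos_dot [a1 [H1 ->]] [/Rlam_pos_dot [a2 [H2 ->]] e]]]].
apply: notsum; exists a1, a2; split => //; split => //.
by apply: (in_W_mulmx_inj wW); rewrite mulmxDr.
Qed.

Lemma Wlam_mulmx u : Wlam R P cor Om1 u -> Wlam R P cor Om (u *m w).
Proof.
move=> [uW uB]; split; first exact: in_W_mul.
by move=> a Ha; rewrite -mulmxA; apply: uB; apply/Blam_dot; exists a.
Qed.

End Transport.
End PositiveSystem.
End RootSystem.

Theorem mainTheorem18 (F : closedFieldType) (hchar : [pchar F] =i pred0)
    (r : nat) (R P : seq 'cV[F]_r) (cor : 'cV[F]_r -> 'cV[F]_r)
    (hR : root_system R cor) (hP : positive_system R P)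
    (Om Om1 : {mpoly F[r]} -> Prop)
    (pOm : prime_ideal Om) (pOm1 : prime_ideal Om1) (v : 'M[F]_r) :
  (forall f, Om1 f <-> dot_set P v Om f) -> Wlam R P cor Om v ->
  (forall b, Blam R P cor Om1 b <-> exists a, Blam R P cor Om a /\ b = v *m a) /\
  (forall u : 'M[F]_r, Wlam R P cor Om1 u -> Wlam R P cor Om (u *m v)).
Proof.
move=> Om1E [vW vB].
have [P_uniq [D [_ _ D_free root_nat_span posE]]] := hP.
have OmN f : Om f -> Om (- f).
  by case: pOm => _ _ OmM _ _ Of; rewrite -mulN1r; apply: OmM.
split=> [b | u].
- exact: (Blam_dot hchar hR P_uniq D_free root_nat_span posE vW Om1E OmN vB).
- exact: (Wlam_mulmx hchar hR P_uniq D_free root_nat_span posE vW Om1E OmN vB).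
Qed.
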